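(* Let $I_{\mathrm{C}}=\langle p_1,p_2,p_3\rangle$ be the ideal of $\mathbb{Q}[x_1,x_2,x_3,d_1,d_2,d_3,L]$ generated by $p_1,p_2,p_3$, and let $I_{\mathrm{C\_sym}}=I_{\mathrm{C}}\cap \operatorname{Sym}\mathbb{Q}[M,L]$. Then $I_{\mathrm{C\_sym}}$ is finitely generated as an ideal of the ring $\operatorname{Sym}\mathbb{Q}[M,L]$; the seven polynomials $\tilde p_2,\tilde p_3,\tilde p_4,\tilde p_5,\tilde p_6,\tilde p_7,\tilde p_8$ belong to $I_{\mathrm{C\_sym}}$ and generate it as an ideal of $\operatorname{Sym}\mathbb{Q}[M,L]$.
   Context: Work in the polynomial ring $\mathbb{Q}[M,L]=\mathbb{Q}[x_1,x_2,x_3,d_1,d_2,d_3,L]$. Define $p_1=x_2^2+x_3^2-d_1^2$, $p_2=x_3^2+x_1^2-d_2^2$, $p_3=x_1^2+x_2^2-d_3^2$. The symmetric group $S_3$ acts on this ring by $\sigma(x_i)=x_{\sigma(i)}$, $\sigma(d_i)=d_{\sigma(i)}$, $\sigma(L)=L$ (i.e. by simultaneously permuting the columns of the matrix $M=\begin{pmatrix}x_1&x_2&x_3\\ d_1&d_2&d_3\end{pmatrix}$). $\operatorname{Sym}\mathbb{Q}[M,L]$ denotes the subring of polynomials invariant under this action (multisymmetric polynomials). Define $\tilde p_2=p_1+p_2+p_3$, $\tilde p_3=d_1p_1+d_2p_2+d_3p_3$, $\tilde p_4=x_1p_1+x_2p_2+x_3p_3$, $\tilde p_5=x_1d_1p_1+x_2d_2p_2+x_3d_3p_3$,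 $\tilde p_6=x_1^2p_1+x_2^2p_2+x_3^2p_3$, $\tilde p_7=d_1^2p_1+d_2^2p_2+d_3^2p_3$, $\tilde p_8=x_1^2d_1^2p_1+x_2^2d_2^2p_2+x_3^2d_3^2p_3$. *)

(* Q[x1,x2,x3,d1,d2,d3,L] is realised as the iterated
   univariate polynomial ring over rat: innermost variable x1, then x2, x3,
   d1, d2, d3, and outermost L. *)
From HB Require Import structures.
From mathcomp Require Import all_boot all_order all_algebra all_fingroup.
Set Implicit Arguments. Unset Strict Implicit. Unset Printing Implicit Defensive.
Import GRing.Theory.
Local Open Scope ring_scope.

Definition P1 : idomainType := {poly rat}.
Definition P2 : idomainType := {poly P1}.
Definition P3 : idomainType := {poly P2}.
Definition P4 : idomainType := {poly P3}.
Definition P5 : idomainType := {poly P4}.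
Definition P6 : idomainType := {poly P5}.
Definition P7 : idomainType := {poly P6}.

Definition emb (c : rat) : P7 :=
  (((((((c%:P : P1)%:P : P2)%:P : P3)%:P : P4)%:P : P5)%:P : P6)%:P : P7).

Definition X1 : P7 := ((((((('X : P1)%:P : P2)%:P : P3)%:P : P4)%:P : P5)%:P : P6)%:P : P7).
Definition X2 : P7 := (((((('X : P2)%:P : P3)%:P : P4)%:P : P5)%:P : P6)%:P : P7).
Definition X3 : P7 := ((((('X : P3)%:P : P4)%:P : P5)%:P : P6)%:P : P7).
Definition D1 : P7 := (((('X : P4)%:P : P5)%:P : P6)%:P : P7).
Definition D2 : P7 := ((('X : P5)%:P : P6)%:P : P7).
Definition D3 : P7 := (('X : P6)%:P : P7).
Definition LL : P7 := ('X : P7).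

Definition pev (A : nzRingType) (B : comNzRingType) (f : A -> B) (y : B)
  (p : {poly A}) : B := (map_poly f p).[y].

Definition subst7 (y1 y2 y3 z1 z2 z3 w : P7) (p : P7) : P7 :=
  let f1 : P1 -> P7 := @pev rat P7 emb y1 in
  let f2 : P2 -> P7 := @pev P1 P7 f1 y2 in
  let f3 : P3 -> P7 := @pev P2 P7 f2 y3 in
  let f4 : P4 -> P7 := @pev P3 P7 f3 z1 in
  let f5 : P5 -> P7 := @pev P4 P7 f4 z2 in
  let f6 : P6 -> P7 := @pev P5 P7 f5 z3 in
  @pev P6 P7 f6 w p.

Definition xv (i : 'I_3) : P7 :=
  if nat_of_ord i == 0%N then X1 else if nat_of_ord i == 1%N then X2 else X3.
Definition dv (i : 'I_3) : P7 :=
  if nat_of_ord i == 0%N then D1 else if nat_of_ord i == 1%N then D2 else D3.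

Definition act (s : 'S_3) (p : P7) : P7 :=
  subst7 (xv (s ord0)) (xv (s (inord 1))) (xv (s (inord 2)))
         (dv (s ord0)) (dv (s (inord 1))) (dv (s (inord 2))) LL p.

Definition symmetric (p : P7) : Prop := forall s : 'S_3, act s p = p.

Definition p1 : P7 := X2 ^+ 2 + X3 ^+ 2 - D1 ^+ 2.
Definition p2 : P7 := X3 ^+ 2 + X1 ^+ 2 - D2 ^+ 2.
Definition p3 : P7 := X1 ^+ 2 + X2 ^+ 2 - D3 ^+ 2.

Definition in_IC (p : P7) : Prop :=
  exists a1 a2 a3 : P7, p = a1 * p1 + a2 * p2 + a3 * p3.

Definition in_ICsym (p : P7) : Prop := in_IC p /\ symmetric p.

Definition in_sym_ideal (gens : seq P7) (p : P7) : Prop :=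
  exists c : seq P7, size c = size gens /\ (forall q, q \in c -> symmetric q) /\
    p = \sum_(i < size gens) c`_i * gens`_i.

Definition pt2 : P7 := p1 + p2 + p3.
Definition pt3 : P7 := D1 * p1 + D2 * p2 + D3 * p3.
Definition pt4 : P7 := X1 * p1 + X2 * p2 + X3 * p3.
Definition pt5 : P7 := X1 * D1 * p1 + X2 * D2 * p2 + X3 * D3 * p3.
Definition pt6 : P7 := X1 ^+ 2 * p1 + X2 ^+ 2 * p2 + X3 ^+ 2 * p3.
Definition pt7 : P7 := D1 ^+ 2 * p1 + D2 ^+ 2 * p2 + D3 ^+ 2 * p3.
Definition pt8 : P7 := X1 ^+ 2 * D1 ^+ 2 * p1 + X2 ^+ 2 * D2 ^+ 2 * p2
                     + X3 ^+ 2 * D3 ^+ 2 * p3.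

Definition ptilde : seq P7 := [:: pt2; pt3; pt4; pt5; pt6; pt7; pt8].

From Pilot Require Import Defs.
From HB Require Import structures.
From mathcomp Require Import all_boot all_order all_algebra all_fingroup.
From mathcomp Require Import ring.
Set Implicit Arguments. Unset Strict Implicit. Unset Printing Implicit Defensive.
Import GRing.Theory.
Local Open Scope ring_scope.

(* Let q_(a,b) = sum_i x_i^a d_i^b p_i ([psum a b]); the p~ are the q_(a,b)
   with a, b <= 2 except q_(2,1), q_(1,2), so J is contained in I_C_sym.
   Conversely let p = a1 p1 + a2 p2 + a3 p3 be symmetric and R = sum_(s in S_3) s
   the Reynolds operator: R is Sym-linear, R(s q) = R(q) and R(p) = 6 p.  As
   p_k = tau(p1) for the transposition tau = (1 k), 6 p = sum_k R(tau(a_k) p1),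
   and it suffices to show that R(u p1) is in J for every u:
   - q_(2,1), q_(1,2) are in J by explicit certificates, and x_i^3 (d_i^3) is a
     Sym-combination of lower powers, so every q_(a,b) is in J;
   - R(x1^a d1^b p1) = 2 q_(a,b) by orbit counting;
   - averaging over (2 3), which fixes x1, d1, p1, reduces R(x1^a d1^b x2^c d2^e p1)
     to these; every u is a Sym-combination of such monomials, since
     x3, d3 and L are Sym-combinations of the other variables. *)

(* Ring morphism, as a proposition, so that it can be proved for the nested
   evaluation maps of Defs without canonical-structure inference. *)
Definition ring_hom (A B : nzRingType) (f : A -> B) :=
  zmod_morphism f /\ monoid_morphism f.

Section Evaluation.
Variables (A : nzRingType) (B : comNzRingType) (f : A -> B).
Hypothesis f_hom : ring_hom f.
HB.instance Definition _ := GRing.isZmodMorphism.Build A B f (proj1 f_hom).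
HB.instance Definition _ := GRing.isMonoidMorphism.Build A B f (proj2 f_hom).
Variable y : B.
Let commr_fy : commr_rmorph f y. Proof. by move=> a; exact: mulrC. Qed.

Lemma pev_hom : ring_hom (pev f y).
Proof.
split=> [p q|]; first exact: (rmorphB (horner_morph commr_fy)).
by split=> [|p q]; [exact: (rmorph1 (horner_morph commr_fy))
                   | exact: (rmorphM (horner_morph commr_fy))].
Qed.

Lemma pevC c : pev f y c%:P = f c. Proof. exact: (horner_morphC commr_fy). Qed.
Lemma pevX : pev f y 'X = y. Proof. exact: (horner_morphX commr_fy). Qed.
End Evaluation.

Lemma polyC_hom (A : nzRingType) : ring_hom (@polyC A).
Proof. by split=> [a b|]; [exact: polyCB | split=> [|a b]; [exact: polyC1 | exact: polyCM]]. Qed.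

Lemma comp_hom (A B C : nzRingType) (f : A -> B) (g : B -> C) :
  ring_hom f -> ring_hom g -> ring_hom (fun a => g (f a)).
Proof.
case=> fZ [f1 fM] [gZ [g1 gM]]; split=> [a b|]; first by rewrite /= fZ gZ.
by split=> [|a b]; rewrite /= ?f1 ?g1 // fM gM.
Qed.

Lemma id_hom (A : nzRingType) : ring_hom (@id A).
Proof. by split=> // a b. Qed.

Ltac hom_tac := lazymatch goal with |- ring_hom _ =>
  solve [assumption | exact: polyC_hom | exact: id_hom
        | apply: comp_hom; hom_tac] end.

Lemma emb_hom : ring_hom emb.
Proof. by rewrite /emb; hom_tac. Qed.

HB.instance Definition _ := GRing.isZmodMorphism.Build rat P7 emb (proj1 emb_hom).
HB.instance Definition _ := GRing.isMonoidMorphism.Build rat P7 emb (proj2 emb_hom).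

Lemma subst7_hom y1 y2 y3 z1 z2 z3 w : ring_hom (subst7 y1 y2 y3 z1 z2 z3 w).
Proof. by do 7 apply: pev_hom; exact: emb_hom. Qed.

Ltac eval_subst7 := rewrite /subst7 /=;
  repeat (first [rewrite pevC | rewrite pevX];
          last by do ?apply: pev_hom; exact: emb_hom).

Section SubstValues.
Variables y1 y2 y3 z1 z2 z3 w : P7.
Local Notation sub := (subst7 y1 y2 y3 z1 z2 z3 w).
Lemma subst7_emb c : sub (emb c) = emb c. Proof. by rewrite /emb; eval_subst7. Qed.
Lemma subst7_X1 : sub X1 = y1. Proof. by rewrite /X1; eval_subst7. Qed.
Lemma subst7_X2 : sub X2 = y2. Proof. by rewrite /X2; eval_subst7. Qed.
Lemma subst7_X3 : sub X3 = y3. Proof. by rewrite /X3; eval_subst7. Qed.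
Lemma subst7_D1 : sub D1 = z1. Proof. by rewrite /D1; eval_subst7. Qed.
Lemma subst7_D2 : sub D2 = z2. Proof. by rewrite /D2; eval_subst7. Qed.
Lemma subst7_D3 : sub D3 = z3. Proof. by rewrite /D3; eval_subst7. Qed.
Lemma subst7_LL : sub LL = w. Proof. by rewrite /LL; eval_subst7. Qed.
End SubstValues.

Lemma poly_hom_ind (A B : nzRingType) (g : {poly A} -> B) (P : B -> Prop) :
  ring_hom g ->
  (forall a, P (g a%:P)) -> (forall u v, P u -> P v -> P (u + v)) ->
  (forall u, P u -> P (u * g 'X)) -> forall p, P (g p).
Proof.
case=> gZ [_ gM] PC PD PX; have g0 : g 0 = 0 by rewrite -(subrr 0) gZ subrr.
have gN v : g (- v) = - g v by rewrite -sub0r gZ g0 sub0r.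
have gD u v : g (u + v) = g u + g v by rewrite -{1}[v]opprK gZ gN opprK.
elim/poly_ind => [|p c IHp].
  by have := PC 0; rewrite polyC0.
by rewrite gD gM; apply: PD; [apply: PX | apply: PC].
Qed.

Lemma P7_ind (P : P7 -> Prop) :
  (forall c, P (emb c)) -> (forall u v, P u -> P v -> P (u + v)) ->
  (forall u, P u -> P (u * X1)) -> (forall u, P u -> P (u * X2)) ->
  (forall u, P u -> P (u * X3)) -> (forall u, P u -> P (u * D1)) ->
  (forall u, P u -> P (u * D2)) -> (forall u, P u -> P (u * D3)) ->
  (forall u, P u -> P (u * LL)) -> forall p, P p.
Proof.
move=> Pc Padd PX1 PX2 PX3 PD1 PD2 PD3 PL p.
apply: (poly_hom_ind (g := id) (id_hom _) _ Padd PL).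
apply: (poly_hom_ind _ _ Padd PD3); first hom_tac.
apply: (poly_hom_ind _ _ Padd PD2); first hom_tac.
apply: (poly_hom_ind _ _ Padd PD1); first hom_tac.
apply: (poly_hom_ind _ _ Padd PX3); first hom_tac.
apply: (poly_hom_ind _ _ Padd PX2); first hom_tac.
apply: (poly_hom_ind _ _ Padd PX1); first hom_tac.
exact: Pc.
Qed.

Section MorphismExtensionality.
Variables f g : P7 -> P7.
Hypotheses (f_hom : ring_hom f) (g_hom : ring_hom g).
HB.instance Definition _ := GRing.isZmodMorphism.Build P7 P7 f (proj1 f_hom).
HB.instance Definition _ := GRing.isMonoidMorphism.Build P7 P7 f (proj2 f_hom).
HB.instance Definition _ := GRing.isZmodMorphism.Build P7 P7 g (proj1 g_hom).
HB.instance Definition _ := GRing.isMonoidMorphism.Build P7 P7 g (proj2 g_hom).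

Lemma P7_hom_ext : (forall c, f (emb c) = g (emb c)) ->
  f X1 = g X1 -> f X2 = g X2 -> f X3 = g X3 ->
  f D1 = g D1 -> f D2 = g D2 -> f D3 = g D3 -> f LL = g LL -> forall p, f p = g p.
Proof.
move=> fgC e1 e2 e3 e4 e5 e6 e7.
have eM v u : f v = g v -> f u = g u -> f (u * v) = g (u * v).
  by move=> ev eu; rewrite !rmorphM /= eu ev.
apply: P7_ind => [||u|u|u|u|u|u|u]; [exact: fgC | | exact: eM | exact: eM
  | exact: eM | exact: eM | exact: eM | exact: eM | exact: eM].
by move=> u v eu ev; rewrite !rmorphD /= eu ev.
Qed.
End MorphismExtensionality.

(* [act] alone would refer to the group actions of the fingroup library. *)
Local Notation act := Defs.act.
(* [symmetric] alone would refer to symmetry of relations. *)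
Local Notation symmetric := Defs.symmetric.

Lemma ord3_cases (P : 'I_3 -> Prop) :
  P ord0 -> P (inord 1) -> P (inord 2) -> forall i, P i.
Proof.
move=> P0 P1 P2 i; have [i0 | i1 | i2] : [\/ i = ord0, i = inord 1 | i = inord 2].
- by case: i => [[|[|[|//]]] ?]; [apply: Or31 | apply: Or32 | apply: Or33];
    apply/val_inj; rewrite /= ?inordK.
all: by subst.
Qed.

Lemma xv0 : xv ord0 = X1. Proof. by []. Qed.
Lemma xv1 : xv (inord 1) = X2. Proof. by rewrite /xv inordK. Qed.
Lemma xv2 : xv (inord 2) = X3. Proof. by rewrite /xv inordK. Qed.
Lemma dv0 : dv ord0 = D1. Proof. by []. Qed.
Lemma dv1 : dv (inord 1) = D2. Proof. by rewrite /dv inordK. Qed.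
Lemma dv2 : dv (inord 2) = D3. Proof. by rewrite /dv inordK. Qed.

Lemma sum_ord3 (F : 'I_3 -> P7) : \sum_(i < 3) F i = F ord0 + F (inord 1) + F (inord 2).
Proof.
rewrite !big_ord_recl big_ord0 addr0 addrA.
by congr (_ + F _ + F _); apply/val_inj; rewrite /= inordK.
Qed.

Lemma act_hom s : ring_hom (act s). Proof. exact: subst7_hom. Qed.
HB.instance Definition _ s :=
  GRing.isZmodMorphism.Build P7 P7 (act s) (proj1 (act_hom s)).
HB.instance Definition _ s :=
  GRing.isMonoidMorphism.Build P7 P7 (act s) (proj2 (act_hom s)).

Section ActionValues.
Variable s : 'S_3.
Lemma act_xv i : act s (xv i) = xv (s i).
Proof.
elim/ord3_cases: i; first exact: subst7_X1.
  by rewrite xv1; exact: subst7_X2.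
by rewrite xv2; exact: subst7_X3.
Qed.
Lemma act_dv i : act s (dv i) = dv (s i).
Proof.
elim/ord3_cases: i; first exact: subst7_D1.
  by rewrite dv1; exact: subst7_D2.
by rewrite dv2; exact: subst7_D3.
Qed.
Lemma act_LL : act s LL = LL. Proof. exact: subst7_LL. Qed.
Lemma act_emb c : act s (emb c) = emb c. Proof. exact: subst7_emb. Qed.
End ActionValues.

(* [act] is a right action of S_3 (permutations compose left to right). *)
Lemma act_comp s t p : act s (act t p) = act (t * s) p.
Proof.
apply: (P7_hom_ext (f := fun p => act s (act t p))) => [||c|||||||].
- exact: comp_hom (act_hom t) (act_hom s).
- exact: act_hom.
- by rewrite !act_emb.
- by rewrite -xv0 !act_xv permM.
- by rewrite -xv1 !act_xv permM.
- by rewrite -xv2 !act_xv permM.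
- by rewrite -dv0 !act_dv permM.
- by rewrite -dv1 !act_dv permM.
- by rewrite -dv2 !act_dv permM.
- by rewrite !act_LL.
Qed.

Lemma act1 p : act 1 p = p.
Proof.
apply: (P7_hom_ext (g := id)) => [||c|||||||].
- exact: act_hom.
- exact: id_hom.
- exact: act_emb.
- by rewrite -xv0 act_xv perm1.
- by rewrite -xv1 act_xv perm1.
- by rewrite -xv2 act_xv perm1.
- by rewrite -dv0 act_dv perm1.
- by rewrite -dv1 act_dv perm1.
- by rewrite -dv2 act_dv perm1.
- exact: act_LL.
Qed.

Section SymmetricSubring.
Implicit Types (p q : P7) (c : rat).
Lemma sym_add p q : symmetric p -> symmetric q -> symmetric (p + q).
Proof. by move=> hp hq s; rewrite rmorphD /= hp hq. Qed.
Lemma sym_opp p : symmetric p -> symmetric (- p).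
Proof. by move=> hp s; rewrite rmorphN /= hp. Qed.
Lemma sym_mul p q : symmetric p -> symmetric q -> symmetric (p * q).
Proof. by move=> hp hq s; rewrite rmorphM /= hp hq. Qed.
Lemma sym_exp p n : symmetric p -> symmetric (p ^+ n).
Proof. by move=> hp s; rewrite rmorphXn /= hp. Qed.
Lemma sym_nat n : symmetric n%:R.
Proof. by move=> s; rewrite rmorph_nat. Qed.
Lemma sym_emb c : symmetric (emb c).
Proof. by move=> s; exact: act_emb. Qed.
Lemma sym_LL : symmetric LL.
Proof. exact: act_LL. Qed.
End SymmetricSubring.

Definition equivariant (F : 'I_3 -> P7) := forall s i, act s (F i) = F (s i).

Section Equivariance.
Implicit Types F G : 'I_3 -> P7.
Lemma equiv_mul F G : equivariant F -> equivariant G -> equivariant (fun i => F i * G i).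
Proof. by move=> hF hG s i; rewrite rmorphM /= hF hG. Qed.
Lemma equiv_sub F G : equivariant F -> equivariant G -> equivariant (fun i => F i - G i).
Proof. by move=> hF hG s i; rewrite rmorphB /= hF hG. Qed.
Lemma equiv_exp F n : equivariant F -> equivariant (fun i => F i ^+ n).
Proof. by move=> hF s i; rewrite rmorphXn /= hF. Qed.
Lemma equiv_const p : symmetric p -> equivariant (fun=> p).
Proof. by move=> hp s i; exact: hp. Qed.

Lemma sym_sum F : equivariant F -> symmetric (\sum_(i < 3) F i).
Proof.
move=> hF s; rewrite rmorph_sum /=; under eq_bigr do rewrite hF.
exact: (esym (reindex_inj perm_inj)).
Qed.
End Equivariance.

Lemma equiv_mono a b : equivariant (fun i => xv i ^+ a * dv i ^+ b).
Proof. by apply: equiv_mul; apply: equiv_exp => s i; rewrite ?act_xv ?act_dv. Qed.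

Definition powsum (a b : nat) : P7 := \sum_(i < 3) xv i ^+ a * dv i ^+ b.

Lemma sym_powsum a b : symmetric (powsum a b).
Proof. exact/sym_sum/equiv_mono. Qed.

Lemma powsumE a b : powsum a b = X1 ^+ a * D1 ^+ b + X2 ^+ a * D2 ^+ b + X3 ^+ a * D3 ^+ b.
Proof. by rewrite /powsum sum_ord3 xv0 xv1 xv2 dv0 dv1 dv2. Qed.

Definition pv (i : 'I_3) : P7 := powsum 2 0 - xv i ^+ 2 - dv i ^+ 2.

Lemma equiv_pv : equivariant pv.
Proof.
apply: equiv_sub; last by apply: equiv_exp => s i; rewrite act_dv.
apply: equiv_sub; first exact/equiv_const/sym_powsum.
by apply: equiv_exp => s i; rewrite act_xv.
Qed.

Lemma pvE : [/\ pv ord0 = p1, pv (inord 1) = p2 & pv (inord 2) = p3].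
Proof.
rewrite /pv powsumE xv0 xv1 xv2 dv0 dv1 dv2 /p1 /p2 /p3.
by split; move: X1 X2 X3 D1 D2 D3 => *; ring.
Qed.

Definition psum (a b : nat) : P7 := \sum_(i < 3) xv i ^+ a * dv i ^+ b * pv i.

Lemma psumE a b :
  psum a b = X1 ^+ a * D1 ^+ b * p1 + X2 ^+ a * D2 ^+ b * p2 + X3 ^+ a * D3 ^+ b * p3.
Proof.
by have [e0 e1 e2] := pvE; rewrite /psum sum_ord3 xv0 xv1 xv2 dv0 dv1 dv2 e0 e1 e2.
Qed.

Lemma sym_psum a b : symmetric (psum a b).
Proof. exact/sym_sum/equiv_mul/equiv_pv/equiv_mono. Qed.

Definition gen_exponents : seq (nat * nat) :=
  [:: (0, 0); (0, 1); (1, 0); (1, 1); (2, 0); (0, 2); (2, 2)]%N.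

Lemma ptilde_psum : ptilde = [seq psum e.1 e.2 | e <- gen_exponents].
Proof.
rewrite /ptilde.
have [-> [-> [-> [-> [-> [-> ->]]]]]] : pt2 = psum 0 0 /\ pt3 = psum 0 1 /\
    pt4 = psum 1 0 /\ pt5 = psum 1 1 /\ pt6 = psum 2 0 /\ pt7 = psum 0 2 /\ pt8 = psum 2 2.
  rewrite !psumE /pt2 /pt3 /pt4 /pt5 /pt6 /pt7 /pt8.
  by move: p1 p2 p3 X1 X2 X3 D1 D2 D3 => *; do ![split | ring].
by [].
Qed.

Definition reynolds (q : P7) : P7 := \sum_(s : 'S_3) act s q.

Lemma reynoldsD p q : reynolds (p + q) = reynolds p + reynolds q.
Proof. by rewrite /reynolds -big_split; apply: eq_bigr => s _; rewrite rmorphD. Qed.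

Lemma reynoldsN q : reynolds (- q) = - reynolds q.
Proof. by rewrite /reynolds -sumrN; apply: eq_bigr => s _; rewrite rmorphN. Qed.

Lemma reynolds_symM f q : symmetric f -> reynolds (f * q) = f * reynolds q.
Proof.
by move=> hf; rewrite /reynolds mulr_sumr; apply: eq_bigr => s _; rewrite rmorphM /= hf.
Qed.

Lemma reynolds_act t q : reynolds (act t q) = reynolds q.
Proof.
rewrite /reynolds [RHS](reindex_inj (mulgI t)).
by apply: eq_bigr => s _; rewrite act_comp.
Qed.

Lemma reynolds_sym p : symmetric p -> reynolds p = p *+ 6.
Proof. by move=> hp; rewrite /reynolds (eq_bigr (fun=> p)) // sumr_const card_Sn. Qed.

(* Orbit counting: each column is sent to a given one by two permutations. *)
Lemma reynolds_orbit F i : equivariant F ->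
  reynolds (F i) *+ 3 = (\sum_(j < 3) F j) *+ 6.
Proof.
move=> hF; rewrite /reynolds; under eq_bigr do rewrite hF.
have moveIndex j : \sum_(s : 'S_3) F (s i) = \sum_(s : 'S_3) F (s j).
  rewrite (reindex_inj (mulgI (tperm i j))).
  by apply: eq_bigr => s _; rewrite permM tpermL.
transitivity (\sum_(j < 3) \sum_(s : 'S_3) F (s j)).
  rewrite [RHS](eq_bigr (fun=> \sum_(s : 'S_3) F (s i))) => [|j _].
    by rewrite sumr_const card_ord.
  exact: esym (moveIndex j).
rewrite exchange_big (eq_bigr (fun=> \sum_(j < 3) F j)) ?sumr_const ?card_Sn // => s _.
exact: (esym (reindex_inj perm_inj)).
Qed.

(* The term a * p_k is carried to (tau a) * p1 by the transposition tau
   exchanging columns 1 and k, so the Reynolds operator sees only p1. *)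
Lemma reynolds_pv a k :
  reynolds (a * pv k) = reynolds (act (tperm ord0 k) a * pv ord0).
Proof.
rewrite -[RHS](reynolds_act (tperm ord0 k)) rmorphM /= act_comp tperm2 act1.
by rewrite equiv_pv tpermL.
Qed.

Section SymIdeal.
Variable gens : seq P7.
Local Notation J := (in_sym_ideal gens).

Lemma sym_ideal0 : J 0.
Proof.
exists (nseq (size gens) 0); rewrite size_nseq; split=> //; split.
  by move=> q /nseqP [-> _] s; rewrite rmorph0.
by rewrite big1 // => i _; rewrite nth_nseq if_same mul0r.
Qed.

Lemma sym_idealD p q : J p -> J q -> J (p + q).
Proof.
case=> [c [sz_c [sym_c ->]]] [c' [sz_c' [sym_c' ->]]].
exists (mkseq (fun i => c`_i + c'`_i) (size gens)); rewrite size_mkseq; split=> //; split.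
  move=> r /mapP [i]; rewrite mem_iota add0n => /andP [_ lt_i] ->.
  by apply: sym_add; [apply: sym_c | apply: sym_c']; rewrite mem_nth ?sz_c ?sz_c'.
by rewrite -big_split; apply: eq_bigr => i _; rewrite nth_mkseq // mulrDl.
Qed.

Lemma sym_idealZ f p : symmetric f -> J p -> J (f * p).
Proof.
move=> hf [c [sz_c [sym_c ->]]].
exists (map (fun r => f * r) c); rewrite size_map; split=> //; split.
  by move=> r /mapP [r' /sym_c hr' ->]; apply: sym_mul.
by rewrite mulr_sumr; apply: eq_bigr => i _; rewrite (nth_map 0) ?sz_c // mulrA.
Qed.

Lemma sym_idealMn m p : J p -> J (p *+ m).
Proof. by move=> hp; rewrite -mulr_natl; apply: sym_idealZ => //; exact: sym_nat. Qed.

Lemma sym_idealN p : J p -> J (- p).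
Proof.
by move=> hp; rewrite -mulN1r; apply: sym_idealZ => //; apply: sym_opp; exact: (sym_nat 1).
Qed.

Lemma sym_ideal_sum (I : finType) (F : I -> P7) : (forall i, J (F i)) -> J (\sum_i F i).
Proof. by move=> hF; apply: big_ind => //; [exact: sym_ideal0 | exact: sym_idealD]. Qed.

Lemma sym_ideal_mem g : g \in gens -> J g.
Proof.
move=> g_in; have lt_g : (index g gens < size gens)%N by rewrite index_mem.
rewrite -(nth_index 0 g_in).
exists (mkseq (fun i => (i == index g gens)%:R) (size gens)); rewrite size_mkseq.
split=> //; split; first by move=> r /mapP [i _ ->]; apply: sym_nat.
rewrite (bigD1 (Ordinal lt_g)) //= nth_mkseq // eqxx mul1r big1 ?addr0 // => i ne_i.
have /negPf ne_index : (i : nat) != index g gens by exact: ne_i.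
by rewrite nth_mkseq // ne_index mul0r.
Qed.

(* Positive integers are invertible in Sym, so J is saturated for them. *)
Lemma sym_ideal_cancel m p : (0 < m)%N -> J (p *+ m) -> J p.
Proof.
move=> m_gt0 hp; have [u u_sym m_unit] : exists2 u, symmetric u & u * m%:R = 1.
  exists (emb m%:R^-1); first exact: sym_emb.
  by rewrite -(rmorph_nat emb) -rmorphM mulVf ?rmorph1 // Num.Theory.pnatr_eq0 -lt0n.
have -> : p = u * (p *+ m) by rewrite -(mulr_natl p) mulrA m_unit mul1r.
exact: sym_idealZ.
Qed.

Lemma sym_ideal_ind (P : P7 -> Prop) : P 0 -> (forall p q, P p -> P q -> P (p + q)) ->
  (forall f p, symmetric f -> P p -> P (f * p)) -> (forall g, g \in gens -> P g) ->
  forall p, J p -> P p.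
Proof.
move=> P0 PD PZ Pgen p [c [sz_c [sym_c ->]]]; apply: big_ind => // i _.
by apply: PZ; [apply: sym_c; rewrite mem_nth ?sz_c | apply/Pgen/mem_nth].
Qed.
End SymIdeal.

(* Every y_i is a root of prod_j (X - y_j), so y_i^n is a combination of
   lower powers of y_i with coefficients independent of i. *)
Lemma pow_root_prod_XsubC (R : comNzRingType) n (y : 'I_n -> R) i :
  y i ^+ n = - \sum_(k < n) (\prod_(j < n) ('X - (y j)%:P))`_k * y i ^+ k.
Proof.
set q := \prod_(j < n) _.
have q_root : q.[y i] = 0 by rewrite horner_prod (bigD1 i) //= hornerXsubC subrr mul0r.
have size_q : size q = n.+1.
  by rewrite size_prod_XsubC /index_enum unlock -enumT size_enum_ord.
have lead_q : q`_n = 1.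
  by have := lead_coef_prod_XsubC (index_enum 'I_n) predT y; rewrite lead_coefE size_q.
apply/eqP; rewrite -addr_eq0 addrC; apply/eqP.
by move: q_root; rewrite horner_coef size_q big_ord_recr /= lead_q mul1r.
Qed.

Lemma sym_coef_prod_XsubC (y : 'I_3 -> P7) k :
  equivariant y -> symmetric (\prod_(j < 3) ('X - (y j)%:P))`_k.
Proof.
move=> hy s; rewrite -coef_map.
suff -> : map_poly (act s) (\prod_(j < 3) ('X - (y j)%:P)) = \prod_(j < 3) ('X - (y j)%:P).
  by [].
rewrite (rmorph_prod (map_poly (act s))) /=.
under eq_bigr do rewrite map_polyXsubC /= hy.
exact: (esym (reindex_inj perm_inj)).
Qed.

Section PowerShift.
Variable y : 'I_3 -> P7.
Local Notation c k := ((\prod_(j < 3) ('X - (y j)%:P))`_k).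

Lemma sum_pow_shift (w : 'I_3 -> P7) a :
  \sum_(i < 3) y i ^+ (a + 3) * w i = - \sum_(k < 3) c k * \sum_(i < 3) y i ^+ (a + k) * w i.
Proof.
have step i : y i ^+ (a + 3) * w i = - \sum_(k < 3) c k * (y i ^+ (a + k) * w i).
  rewrite exprD (pow_root_prod_XsubC y i) mulrN mulNr.
  rewrite mulr_sumr mulr_suml; congr (- _); apply: eq_bigr => k _; rewrite exprD.
  by move: (y i ^+ a) (y i ^+ k) (w i) (c k) => *; ring.
rewrite (eq_bigr _ (fun i _ => step i)) sumrN exchange_big; congr (- _).
by apply: eq_bigr => k _; rewrite mulr_sumr.
Qed.
End PowerShift.

Lemma psum_shiftx a b : psum (a + 3) b =
  - \sum_(k < 3) (\prod_(j < 3) ('X - (xv j)%:P))`_k * psum (a + k) b.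
Proof.
rewrite /psum; under eq_bigr do rewrite -mulrA.
rewrite sum_pow_shift; congr (- _); apply: eq_bigr => k _; congr (_ * _).
by apply: eq_bigr => i _; rewrite -mulrA.
Qed.

Lemma psum_shiftd a b : psum a (b + 3) =
  - \sum_(k < 3) (\prod_(j < 3) ('X - (dv j)%:P))`_k * psum a (b + k).
Proof.
rewrite /psum; under eq_bigr do rewrite -mulrA mulrCA.
rewrite sum_pow_shift; congr (- _); apply: eq_bigr => k _; congr (_ * _).
by apply: eq_bigr => i _; rewrite -mulrA mulrCA.
Qed.

Local Notation J := (in_sym_ideal ptilde).

Lemma J_gen a b : (a, b) \in gen_exponents -> J (psum a b).
Proof.
move=> ab_in; apply: sym_ideal_mem; rewrite ptilde_psum.
exact: (map_f (fun e => psum e.1 e.2) ab_in).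
Qed.

Ltac sym_tac := lazymatch goal with
  | |- symmetric (_ + _) => apply: sym_add; sym_tac
  | |- symmetric (- _) => apply: sym_opp; sym_tac
  | |- symmetric (_ * _) => apply: sym_mul; sym_tac
  | |- symmetric (_ ^+ _) => apply: sym_exp; sym_tac
  | |- symmetric (_ %:R) => exact: sym_nat
  | |- symmetric (powsum _ _) => exact: sym_powsum
  end.

Ltac ideal_tac := lazymatch goal with
  | |- in_sym_ideal _ (_ + _) => apply: sym_idealD; ideal_tac
  | |- in_sym_ideal _ (_ * psum _ _) =>
      apply: sym_idealZ; [sym_tac | apply: J_gen; exact: isT]
  end.

Lemma J_psum21 : J (psum 2 1).
Proof.
apply: (@sym_ideal_cancel _ 12) => //.
have -> : psum 2 1 *+ 12 =
    (3%:R * powsum 2 1 - 4%:R * powsum 1 0 * powsum 1 1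
       + 2%:R * powsum 1 0 ^+ 2 * powsum 0 1 - powsum 0 1 * powsum 2 0 - powsum 0 3)
      * psum 0 0
    + (powsum 0 2 - 2%:R * powsum 1 0 ^+ 2) * psum 0 1
    + (4%:R * powsum 1 1 - 4%:R * powsum 1 0 * powsum 0 1) * psum 1 0
    + 8%:R * powsum 1 0 * psum 1 1 + 4%:R * powsum 0 1 * psum 2 0.
  rewrite !psumE !powsumE /p1 /p2 /p3.
  by move: X1 X2 X3 D1 D2 D3 => *; ring.
by ideal_tac.
Qed.

Lemma J_psum12 : J (psum 1 2).
Proof.
apply: (@sym_ideal_cancel _ 6) => //.
have -> : psum 1 2 *+ 6 =
    (powsum 1 0 * powsum 0 1 ^+ 2 + 2%:R * powsum 1 2 - 2%:R * powsum 0 1 * powsum 1 1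
       - powsum 1 0 * powsum 0 2) * psum 0 0
    + (2%:R * powsum 1 1 - 2%:R * powsum 1 0 * powsum 0 1) * psum 0 1
    + (powsum 0 2 - powsum 0 1 ^+ 2) * psum 1 0
    + 4%:R * powsum 0 1 * psum 1 1 + 2%:R * powsum 1 0 * psum 0 2.
  rewrite !psumE !powsumE /p1 /p2 /p3.
  by move: X1 X2 X3 D1 D2 D3 => *; ring.
by ideal_tac.
Qed.

Lemma J_psum_small a b : (a <= 2)%N -> (b <= 2)%N -> J (psum a b).
Proof.
case: a => [|[|[|//]]]; case: b => [|[|[|//]]] => _ _; try by apply: J_gen.
- exact: J_psum12.
- exact: J_psum21.
Qed.

Lemma J_psum a b : J (psum a b).
Proof.
elim/ltn_ind: a b => a IHa b; have [a_small | a_big] := leqP a 2.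
  elim/ltn_ind: b => b IHb; have [b_small | b_big] := leqP b 2.
    exact: J_psum_small.
  rewrite -(subnK b_big) psum_shiftd; apply/sym_idealN/sym_ideal_sum => k.
  apply: sym_idealZ; first by apply: sym_coef_prod_XsubC => s i; rewrite act_dv.
  by apply: IHb; rewrite -[ltnRHS](subnK b_big) ltn_add2l.
rewrite -(subnK a_big) psum_shiftx; apply/sym_idealN/sym_ideal_sum => k.
apply: sym_idealZ; first by apply: sym_coef_prod_XsubC => s i; rewrite act_xv.
by apply: IHa; rewrite -[ltnRHS](subnK a_big) ltn_add2l.
Qed.

Lemma J_reynolds_x1d1 a b : J (reynolds (X1 ^+ a * D1 ^+ b * p1)).
Proof.
apply: (@sym_ideal_cancel _ 3) => //; have [p1E _ _] := pvE.
rewrite -xv0 -dv0 -p1E (reynolds_orbit ord0 (F := fun i => xv i ^+ a * dv i ^+ b * pv i)).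
  exact/sym_idealMn/J_psum.
exact/equiv_mul/equiv_pv/equiv_mono.
Qed.

Lemma swap_sum_identity (R : comNzRingType) (x1 x2 x3 d1 d2 d3 p : R) a b c e :
  x1 ^+ a * d1 ^+ b * x2 ^+ c * d2 ^+ e * p + x1 ^+ a * d1 ^+ b * x3 ^+ c * d3 ^+ e * p =
  (x1 ^+ c * d1 ^+ e + x2 ^+ c * d2 ^+ e + x3 ^+ c * d3 ^+ e) * (x1 ^+ a * d1 ^+ b * p)
    - x1 ^+ (a + c) * d1 ^+ (b + e) * p.
Proof.
rewrite !exprD.
by move: (x1 ^+ a) (x1 ^+ c) (d1 ^+ b) (d1 ^+ e) (x2 ^+ c) (d2 ^+ e) (x3 ^+ c) (d3 ^+ e)
  => *; ring.
Qed.

Definition mono (a b c e : nat) : P7 := X1 ^+ a * D1 ^+ b * X2 ^+ c * D2 ^+ e.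

(* Averaging over the transposition (2 3), which fixes x1, d1 and p1, turns
   x2^c d2^e into the Sym-combination x2^c d2^e + x3^c d3^e of powers of x1, d1. *)
Lemma J_reynolds_mono a b c e : J (reynolds (mono a b c e * p1)).
Proof.
set q := mono a b c e * p1; pose tau : 'S_3 := tperm (inord 1) (inord 2).
have [p1E _ _] := pvE.
have tau_q : act tau q = X1 ^+ a * D1 ^+ b * X3 ^+ c * D3 ^+ e * p1.
  have tau0 : tau ord0 = ord0 by rewrite tpermD // -val_eqE /= inordK.
  rewrite /q /mono !rmorphM !rmorphXn /= -xv0 -dv0 -xv1 -dv1 -p1E.
  by rewrite !act_xv !act_dv equiv_pv tau0 tpermL xv2 dv2.
have sum_q : q + act tau q =
    powsum c e * (X1 ^+ a * D1 ^+ b * p1) - X1 ^+ (a + c) * D1 ^+ (b + e) * p1.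
  by rewrite tau_q /q /mono powsumE; apply: swap_sum_identity.
apply: (@sym_ideal_cancel _ 2) => //.
rewrite mulr2n -{2}(reynolds_act tau q) -reynoldsD sum_q reynoldsD reynoldsN.
rewrite reynolds_symM; last exact: sym_powsum.
apply: sym_idealD; last exact/sym_idealN/J_reynolds_x1d1.
by apply: sym_idealZ; [exact: sym_powsum | exact: J_reynolds_x1d1].
Qed.

Lemma monomial_shift (R : comNzRingType) (x1 d1 x2 d2 : R) (a b c e : nat) :
  let m a b c e := x1 ^+ a * d1 ^+ b * x2 ^+ c * d2 ^+ e in
  [/\ m 0%N 0%N 0%N 0%N = 1, x1 * m a b c e = m a.+1 b c e, d1 * m a b c e = m a b.+1 c e,
      x2 * m a b c e = m a b c.+1 e & d2 * m a b c e = m a b c e.+1].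
Proof.
rewrite /= !expr0 !mulr1 !exprS.
by split=> //; move: (x1 ^+ a) (d1 ^+ b) (x2 ^+ c) (d2 ^+ e) => *; ring.
Qed.

Lemma mono_shift a b c e :
  [/\ mono 0%N 0%N 0%N 0%N = 1, X1 * mono a b c e = mono a.+1 b c e,
      D1 * mono a b c e = mono a b.+1 c e, X2 * mono a b c e = mono a b c.+1 e
    & D2 * mono a b c e = mono a b c e.+1].
Proof. exact: monomial_shift. Qed.

Lemma X3E : X3 = powsum 1 0 - X1 - X2.
Proof. by rewrite powsumE; move: X1 X2 X3 D1 D2 D3 => *; ring. Qed.
Lemma D3E : D3 = powsum 0 1 - D1 - D2.
Proof. by rewrite powsumE; move: X1 X2 X3 D1 D2 D3 => *; ring. Qed.

Lemma mul_sub3_identity (R : comNzRingType) (u s y z m p : R) :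
  u * (s - y - z) * m * p = s * (u * m * p) - u * (y * m) * p - u * (z * m) * p.
Proof. by ring. Qed.

(* Used to eliminate x3 = P_(1,0) - x1 - x2 and d3 = P_(0,1) - d1 - d2. *)
Lemma J_reynolds_sub3 u s y z m : symmetric s ->
  J (reynolds (u * m * p1)) -> J (reynolds (u * (y * m) * p1)) ->
  J (reynolds (u * (z * m) * p1)) -> J (reynolds (u * (s - y - z) * m * p1)).
Proof.
move=> s_sym Jm Jy Jz; rewrite mul_sub3_identity !reynoldsD !reynoldsN reynolds_symM //.
apply: sym_idealD; first apply: sym_idealD.
- exact: sym_idealZ s_sym Jm.
- exact: sym_idealN Jy.
- exact: sym_idealN Jz.
Qed.

Lemma mulrAC3 (R : comNzRingType) (u v m p : R) : u * v * m * p = v * (u * m * p).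
Proof. by ring. Qed.

(* R(u p1) lies in J for every polynomial u: induction on u, carrying along
   an arbitrary monomial in x1, d1, x2, d2. *)
Lemma J_reynolds_p1 u : J (reynolds (u * p1)).
Proof.
suff J_mono : forall a b c e, J (reynolds (u * mono a b c e * p1)).
  have [mono0 _ _ _ _] := mono_shift 0%N 0%N 0%N 0%N.
  by have := J_mono 0%N 0%N 0%N 0%N; rewrite mono0 (mulr1 u).
elim/P7_ind: u => [k | u v Ju Jv | u Ju | u Ju | u Ju | u Ju | u Ju | u Ju | u Ju] a b c e;
  have [_ mX1 mD1 mX2 mD2] := mono_shift a b c e.
- rewrite -mulrA reynolds_symM; last exact: sym_emb.
  by apply: sym_idealZ; [exact: sym_emb | exact: J_reynolds_mono].
- by rewrite !mulrDl reynoldsD; apply: sym_idealD.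
- by rewrite -(mulrA u X1) mX1; apply: Ju.
- by rewrite -(mulrA u X2) mX2; apply: Ju.
- rewrite X3E; apply: J_reynolds_sub3; first exact: sym_powsum.
  + exact: Ju.
  + by rewrite mX1; exact: Ju.
  + by rewrite mX2; exact: Ju.
- by rewrite -(mulrA u D1) mD1; apply: Ju.
- by rewrite -(mulrA u D2) mD2; apply: Ju.
- rewrite D3E; apply: J_reynolds_sub3; first exact: sym_powsum.
  + exact: Ju.
  + by rewrite mD1; exact: Ju.
  + by rewrite mD2; exact: Ju.
- rewrite mulrAC3 (reynolds_symM _ sym_LL).
  by apply: sym_idealZ; [exact: sym_LL | exact: Ju].
Qed.

(* Symmetric elements of I_C lie in J: average over S_3. *)
Lemma J_of_ICsym p : in_ICsym p -> J p.
Proof.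
case=> [[a1 [a2 [a3 ->]]] p_sym]; have [p1E p2E p3E] := pvE.
apply: (@sym_ideal_cancel _ 6) => //; rewrite -(reynolds_sym p_sym) !reynoldsD.
rewrite -p2E -p3E (reynolds_pv a2) (reynolds_pv a3) p1E.
by apply: sym_idealD; first apply: sym_idealD; apply: J_reynolds_p1.
Qed.

Lemma in_IC_add p q : in_IC p -> in_IC q -> in_IC (p + q).
Proof.
case=> [a1 [a2 [a3 ->]]] [b1 [b2 [b3 ->]]]; exists (a1 + b1), (a2 + b2), (a3 + b3).
by move: p1 p2 p3 => *; ring.
Qed.

Lemma in_IC_mul f p : in_IC p -> in_IC (f * p).
Proof.
case=> [a1 [a2 [a3 ->]]]; exists (f * a1), (f * a2), (f * a3).
by move: p1 p2 p3 => *; ring.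
Qed.

Lemma ICsym_psum a b : in_ICsym (psum a b).
Proof. by split; [rewrite psumE; do 3 eexists | exact: sym_psum]. Qed.

Lemma ICsym_ptilde g : g \in ptilde -> in_ICsym g.
Proof. by rewrite ptilde_psum => /mapP [[a b] _ ->]; exact: ICsym_psum. Qed.

Lemma ICsym_of_J p : J p -> in_ICsym p.
Proof.
apply: sym_ideal_ind => [||f q f_sym [q_IC q_sym] | ]; last exact: ICsym_ptilde.
- by split; [exists 0, 0, 0; rewrite !mul0r !addr0 | exact: (sym_nat 0)].
- by move=> q r [q_IC q_sym] [r_IC r_sym]; split; [exact: in_IC_add | exact: sym_add].
- by split; [exact: in_IC_mul | exact: sym_mul].
Qed.

Theorem theorem1p2 :
  (exists gens : seq P7, (forall g, g \in gens -> in_ICsym g) /\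
     (forall p : P7, in_ICsym p <-> in_sym_ideal gens p)) /\
  (forall g, g \in ptilde -> in_ICsym g) /\
  (forall p : P7, in_ICsym p <-> in_sym_ideal ptilde p).
Proof.
have ICsym_J p : in_ICsym p <-> J p by split; [exact: J_of_ICsym | exact: ICsym_of_J].
split; first by exists ptilde; split; [exact: ICsym_ptilde | exact: ICsym_J].
by split; [exact: ICsym_ptilde | exact: ICsym_J].
Qed.
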